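(* Let $q\in\mathscr{P}_2(\mathbb{R}^d)$ not give mass to small sets, and let $\psi:\mathbb{R}^d\to(-\infty,+\infty]$ be a proper convex function. Then \[ \sup_{p\in\mathscr{P}_2(\mathbb{R}^d)}\Big(\mathrm{MCov}(p,q)-\int\psi\,dp\Big)=\int\psi^\ast\,dq. \]
   Context: $\mathscr{P}_2(\mathbb{R}^d)$: Borel probability measures with finite second moment. $q$ does not give mass to small sets: $q(A)=0$ for measurable $A$ of Hausdorff dimension $\le d-1$. $\mathrm{MCov}(p,q)\coloneqq\sup_{\tilde\pi\in\mathsf{Cpl}(p,q)}\int\langle y,z\rangle\,d\tilde\pi$ over couplings. A proper convex function is a convex $\psi$ with $\operatorname{dom}\psi=\{\psi<+\infty\}\neq\varnothing$. $\psi^\ast(x)\coloneqq\sup_y(\langle x,y\rangle-\psi(y))$. *)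

From HB Require Import structures.
From mathcomp Require Import all_boot all_order all_algebra.
From mathcomp Require Import all_classical all_reals all_analysis.
From mathcomp Require Import measurable_realfun.
Set Implicit Arguments. Unset Strict Implicit. Unset Printing Implicit Defensive.
Import Order.TTheory GRing.Theory Num.Theory.
Import numFieldNormedType.Exports.
Local Open Scope classical_set_scope.
Local Open Scope ring_scope.

(* R^d = row vectors 'rV[R]_d, equipped with its Borel sigma-algebra
   (the sigma-algebra generated by the open sets of the product topology). *)
Definition Rd (R : realType) (d : nat) := g_sigma_algebraType (@open 'rV[R]_d).
HB.instance Definition _ (R : realType) (d : nat) :=
  Measurable.on (Rd R d).

Definition dotp (R : realType) (d : nat) (x y : 'rV[R]_d) : R :=
  \sum_(i < d) x ord0 i * y ord0 i.
Definition sqnorm (R : realType) (d : nat) (x : 'rV[R]_d) : R := dotp x x.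
Definition edist (R : realType) (d : nat) (x y : 'rV[R]_d) : R :=
  Num.sqrt (sqnorm (x - y)).

(* Euclidean diameter of a set (in \bar R; -oo for the empty set). *)
Definition diam (R : realType) (d : nat) (A : set 'rV[R]_d) : \bar R :=
  ereal_sup [set (edist x y)%:E | x in A & y in A].

(* Contribution diam(C)^s of a covering set, with the convention that the
   empty set contributes 0 (so that H^0 is the counting measure). *)
Definition diam_pow (R : realType) (d : nat) (s : R) (C : set 'rV[R]_d) : \bar R :=
  if `[< C = set0 >] then 0%E else (powR (fine (diam C)) s)%:E.

Definition hausdorff_pre (R : realType) (d : nat) (s delta : R)
    (A : set 'rV[R]_d) : \bar R :=
  ereal_inf [set (\sum_(0 <= n <oo) diam_pow s (C n))%E |
             C in [set C : nat -> set 'rV[R]_d |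
                     A `<=` \bigcup_n C n /\
                     forall n, (diam (C n) <= delta%:E)%E]].

(* s-dimensional Hausdorff outer measure H^s(A) = lim_{delta -> 0+} H^s_delta(A)
   (= sup over delta > 0, by monotonicity). *)
Definition hausdorff (R : realType) (d : nat) (s : R) (A : set 'rV[R]_d) : \bar R :=
  ereal_sup [set hausdorff_pre s delta A | delta in [set delta : R | 0 < delta]].

Definition hausdorff_dim (R : realType) (d : nat) (A : set 'rV[R]_d) : \bar R :=
  ereal_inf [set s%:E | s in [set s : R | 0 <= s /\ hausdorff s A = 0%E]].

Definition no_small_mass (R : realType) (d : nat) (q : probability (Rd R d) R) : Prop :=
  forall A : set (Rd R d), measurable A ->
    (hausdorff_dim A <= (d%:R - 1)%:E)%E -> q A = 0%E.

Definition P2 (R : realType) (d : nat) (p : probability (Rd R d) R) : Prop :=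
  (\int[p]_x (sqnorm x)%:E < +oo)%E.

Definition Cpl (R : realType) (d : nat) (p q : probability (Rd R d) R)
    : set (probability (Rd R d * Rd R d)%type R) :=
  [set pi | (forall A : set (Rd R d), measurable A -> pi (fst @^-1` A) = p A) /\
            (forall A : set (Rd R d), measurable A -> pi (snd @^-1` A) = q A)].

Definition MCov (R : realType) (d : nat) (p q : probability (Rd R d) R) : \bar R :=
  ereal_sup [set (\int[pi]_z (dotp z.1 z.2)%:E)%E | pi in Cpl p q].

Definition proper_convex (R : realType) (d : nat) (psi : Rd R d -> \bar R) : Prop :=
  (forall x, psi x != -oo%E) /\
  (exists x, (psi x < +oo)%E) /\
  (forall (x y : 'rV[R]_d) (t : R), 0 < t < 1 ->
     (psi (t *: x + (1 - t) *: y)%R <= t%:E * psi x + (1 - t)%:E * psi y)%E).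

Definition conjugate (R : realType) (d : nat) (psi : Rd R d -> \bar R)
    : Rd R d -> \bar R :=
  fun x => ereal_sup [set ((dotp x y)%:E - psi y)%E | y in [set: 'rV[R]_d]].

From HB Require Import structures.
From mathcomp Require Import all_boot all_order all_algebra.
From mathcomp Require Import all_classical all_reals all_analysis.
From mathcomp Require Import measurable_realfun.
From mathcomp Require Import ring lra.
Import Order.TTheory GRing.Theory Num.Theory.
Import numFieldNormedType.Exports.
Local Open Scope classical_set_scope.
Local Open Scope ring_scope.
Set Implicit Arguments. Unset Strict Implicit.

(* Fenchel-Young, <z, w> <= psi w + psi^* z, integrated against any coupling
   of p and q gives "<=" (psi is bounded below by an affine function as soon
   as psi^* is finite somewhere, which makes the integrals meaningful).
   For ">=", write psi^* z as the supremum of the countably many affine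
   functions z |-> <z, y_n> - psi y_n, with (y_n, psi y_n) dense in the
   finite part of the graph of psi.  The map T_N sending z to the best y_n
   with n <= N is measurable and bounded, so p_N = T_N # q is in P_2, the
   coupling (T_N, id) # q shows MCov(p_N, q) - \int psi dp_N >=
   \int max_{n <= N} (<z, y_n> - psi y_n) dq(z), and monotone convergence
   lets N -> oo. *)

Section Euclidean.
Variables (R : realType) (d : nat).
Implicit Types x y z : 'rV[R]_d.

Lemma dotpC x y : dotp x y = dotp y x.
Proof. by apply: eq_bigr => i _; rewrite mulrC. Qed.

Lemma sqnorm_ge0 x : 0 <= sqnorm x.
Proof. by apply: sumr_ge0 => i _; rewrite -expr2 sqr_ge0. Qed.

Lemma normr_dotp_le x y : `|dotp x y| <= sqnorm x + sqnorm y.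
Proof.
rewrite /sqnorm /dotp -big_split /=.
apply: le_trans (ler_norm_sum _ _ _) _; apply: ler_sum => i _.
rewrite normrM -!expr2 -[x _ _ ^+ 2]real_normK ?num_real //.
rewrite -[y _ _ ^+ 2]real_normK ?num_real //.
have := normr_ge0 (x ord0 i); have := normr_ge0 (y ord0 i); nra.
Qed.

Lemma dotp_sub_le z x y (e : R) : (forall c, `|x ord0 c - y ord0 c| <= e) ->
  dotp z x - dotp z y <= (\sum_c `|z ord0 c|) * e.
Proof.
move=> xy; rewrite /dotp -sumrB mulr_suml; apply: ler_sum => c _.
rewrite -mulrBr; apply: le_trans (ler_norm _) _.
by rewrite normrM ler_wpM2l.
Qed.

End Euclidean.

Section Measurability.
Variables (R : realType) (d : nat).

Lemma measurable_coord (i : 'I_d) :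
  measurable_fun [set: Rd R d] (fun x : Rd R d => (x : 'rV[R]_d) ord0 i).
Proof.
apply: (measurability _ (RGenOpens.measurableE R)).
move=> _ [_ [a [b ->]] <-]; rewrite setTI; apply: sub_sigma_algebra.
apply: (@open_comp _ _ (fun M : 'M[R]_(1, d) => M ord0 i)).
  by move=> x _; exact: coord_continuous.
exact: interval_open.
Qed.

Lemma measurable_dotp dX (X : measurableType dX) (f g : X -> Rd R d) :
  measurable_fun setT f -> measurable_fun setT g ->
  measurable_fun setT (fun x => dotp (f x) (g x)).
Proof.
move=> mf mg; apply: measurable_sum => i; apply: measurable_funM.
  exact: measurableT_comp (measurable_coord i) mf.
exact: measurableT_comp (measurable_coord i) mg.
Qed.

Lemma measurable_sqnorm : measurable_fun [set: Rd R d] (@sqnorm R d).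
Proof. exact: measurable_dotp. Qed.

End Measurability.

Section Integration.
Context dX (X : measurableType dX) (R : realType).
Variable mu : {measure set X -> \bar R}.
Local Open Scope ereal_scope.

Lemma le_integral_measurable (f g : X -> \bar R) :
  measurable_fun setT f -> measurable_fun setT g ->
  (forall x, f x <= g x) -> \int[mu]_x f x <= \int[mu]_x g x.
Proof.
move=> mf mg fg.
have fgT : {in setT, forall x, f x <= g x} by move=> x _; exact: fg.
rewrite integralE [leRHS]integralE; apply: leeB; apply: ge0_le_integral => //.
- exact: measurable_funepos.
- exact: measurable_funepos.
- by move=> x _; exact: funepos_le fgT x (in_setT x).
- exact: measurable_funeneg.
- exact: measurable_funeneg.
- by move=> x _; exact: funeneg_le fgT x (in_setT x).
Qed.

Lemma integrable_normr_le (f b : X -> R) : measurable_fun setT f ->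
  mu.-integrable setT (EFin \o b) -> (forall x, (`|f x| <= b x)%R) ->
  mu.-integrable setT (EFin \o f).
Proof.
move=> mf ib fb; apply: (le_integrable measurableT _ _ ib).
  exact/measurable_EFinP.
by move=> x _ /=; rewrite lee_fin (le_trans (fb x)) // ler_norm.
Qed.

(* When [\int H = +oo], the negative part of [H + g] is dominated by [|g|],
   so the integral of [H + g] is [+oo] as well. *)
Lemma ge0_integralD_integrable (H : X -> \bar R) (g : X -> R) :
  measurable_fun setT H -> (forall x, 0 <= H x) ->
  mu.-integrable setT (EFin \o g) ->
  \int[mu]_x (H x + (g x)%:E) = \int[mu]_x H x + \int[mu]_x (g x)%:E.
Proof.
move=> mH H0 ig.
have mg : measurable_fun setT (EFin \o g) := measurable_int _ ig.
have gfin := integrable_fin_num measurableT ig.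
have [Hfin|Hoo] := ltP (\int[mu]_x H x) +oo.
  apply: integralD => //; apply/integrableP; split => //.
  by under eq_integral do rewrite gee0_abs //.
have {Hoo}HI : \int[mu]_x H x = +oo by apply/eqP; rewrite eq_le leey Hoo.
rewrite HI addye; last by move: gfin; rewrite fin_numE => /andP[].
set F := fun x => H x + (g x)%:E.
have mF : measurable_fun setT F := emeasurable_funD mH mg.
have ia : mu.-integrable setT (fun x => (`|g x|)%:E) := integrable_abse ig.
have iafin := integrable_fin_num measurableT ia.
have ma : measurable_fun setT (fun x => (`|g x|)%:E) := measurable_int _ ia.
have negF : \int[mu]_x F^\- x <= \int[mu]_x (`|g x|)%:E.
  apply: ge0_le_integral => //; first exact: measurable_funeneg.
  move=> x _; rewrite funenegE ge_max lee_fin normr_ge0 andbT leeNl.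
  apply: le_trans (leeDr _ (H0 x)).
  by rewrite -EFinN lee_fin lerNl -normrN ler_norm.
have posF : +oo <= \int[mu]_x F^\+ x + \int[mu]_x (`|g x|)%:E.
  rewrite -ge0_integralD //; last exact: measurable_funepos.
  rewrite -HI; apply: ge0_le_integral => //.
    by apply: emeasurable_funD => //; exact: measurable_funepos.
  move=> x _; have FF : F x <= F^\+ x by rewrite funeposE le_max lexx.
  apply: le_trans (leeD2r _ FF).
  rewrite /F -addeA -EFinD leeDl // lee_fin.
  by have := ler_norm (- g x); rewrite normrN => h; lra.
rewrite (integralE _ _ F); move: posF negF iafin.
have : 0 <= \int[mu]_x F^\- x by exact: integral_ge0.
case: (\int[mu]_x `|g x|%:E) => [s||] //.
by case: (\int[mu]_x F^\+ x) => [r||] //; case: (\int[mu]_x F^\- x).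
Qed.

Lemma integral_lbounded_split (F : X -> \bar R) (g : X -> R) :
  measurable_fun setT F -> (forall x, (g x)%:E <= F x) ->
  mu.-integrable setT (EFin \o g) ->
  \int[mu]_x F x = \int[mu]_x (F x - (g x)%:E) + \int[mu]_x (g x)%:E.
Proof.
move=> mF Fg ig; rewrite -ge0_integralD_integrable //.
- by apply: eq_integral => x _; rewrite subeK.
- exact: emeasurable_funB mF (measurable_int _ ig).
- by move=> x; rewrite sube_ge0.
Qed.

Lemma integral_lbounded_gtNy (F : X -> \bar R) (g : X -> R) :
  measurable_fun setT F -> (forall x, (g x)%:E <= F x) ->
  mu.-integrable setT (EFin \o g) -> -oo < \int[mu]_x F x.
Proof.
move=> mF Fg ig.
apply: lt_le_trans (le_integral_measurable (measurable_int _ ig) mF Fg).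
by have := integrable_fin_num measurableT ig; rewrite fin_numElt => /andP[].
Qed.

Lemma integralD_lbounded (F1 F2 : X -> \bar R) (g1 g2 : X -> R) :
  measurable_fun setT F1 -> measurable_fun setT F2 ->
  (forall x, (g1 x)%:E <= F1 x) -> (forall x, (g2 x)%:E <= F2 x) ->
  mu.-integrable setT (EFin \o g1) -> mu.-integrable setT (EFin \o g2) ->
  \int[mu]_x (F1 x + F2 x) = \int[mu]_x F1 x + \int[mu]_x F2 x.
Proof.
move=> mF1 mF2 h1 h2 i1 i2.
have mg1 := measurable_int _ i1; have mg2 := measurable_int _ i2.
have i12 : mu.-integrable setT (EFin \o (fun x => g1 x + g2 x)%R).
  rewrite (_ : _ \o _ = (EFin \o g1) \+ (EFin \o g2)); first exact: integrableD.
  by apply/funext => x /=; rewrite EFinD.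
rewrite (integral_lbounded_split mF1 h1 i1) (integral_lbounded_split mF2 h2 i2).
rewrite (@integral_lbounded_split _ (fun x => g1 x + g2 x)%R) //; first last.
- by move=> x; rewrite EFinD; exact: leeD.
- exact: emeasurable_funD.
rewrite addeACA; congr (_ + _).
  rewrite -ge0_integralD //; last 4 first.
  - by move=> x _; rewrite sube_ge0.
  - exact: emeasurable_funB.
  - by move=> x _; rewrite sube_ge0.
  - exact: emeasurable_funB.
  by apply: eq_integral => x _; rewrite EFinD oppeD //= addeACA.
rewrite -(integralD_EFin measurableT i1 i2).
by apply: eq_integral => x _; rewrite /= EFinD.
Qed.

Context dY (Y : measurableType dY) (nu : {measure set Y -> \bar R}).
Variable phi : X -> Y.
Hypotheses (mphi : measurable_fun setT phi)
  (nu_image : forall A, measurable A -> nu A = mu (phi @^-1` A)).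

Lemma integral_image_measure (f : Y -> \bar R) : measurable_fun setT f ->
  \int[nu]_y f y = \int[mu]_x f (phi x).
Proof.
move=> mf; rewrite (eq_measure_integral (pushforward mu phi)); last first.
  by move=> A mA _; exact: nu_image.
have push (h : Y -> \bar R) : measurable_fun setT h -> (forall y, 0 <= h y) ->
    \int[pushforward mu phi]_y h y = \int[mu]_x h (phi x).
  by move=> mh h0; rewrite ge0_integral_pushforward // preimage_setT.
rewrite -[RHS]/(\int[mu]_x (f \o phi) x) integralE [RHS]integralE.
rewrite (funepos_comp f phi) (funeneg_comp f phi) !push //.
- exact: measurable_funeneg.
- exact: measurable_funepos.
Qed.

Lemma integrable_image_measure (h : Y -> R) :
  nu.-integrable setT (EFin \o h) -> mu.-integrable setT (EFin \o (h \o phi)).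
Proof.
move=> ih; have mh := measurable_int _ ih.
apply/integrableP; split; first exact: measurableT_comp mh mphi.
move/integrableP: ih => [_]; rewrite integral_image_measure //.
exact: measurableT_comp (@abse_measurable R setT) mh.
Qed.

End Integration.

Section SecondMoment.
Variables (R : realType) (d : nat).

Lemma P2_distribution_bounded (q : probability (Rd R d) R)
    (T : {mfun Rd R d >-> Rd R d}) (B : R) :
  (forall z, sqnorm (T z) <= B) -> P2 (distribution q T).
Proof.
move=> TB; rewrite /P2 ge0_integral_distribution //; first last.
- by move=> z; rewrite lee_fin sqnorm_ge0.
- by apply/measurable_EFinP; exact: measurable_sqnorm.
apply: (@le_lt_trans _ _ (\int[q]_z B%:E)%E).
  apply: le_integral_measurable => [||z]; last by rewrite lee_fin TB.
    apply/measurable_EFinP.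
    exact: measurableT_comp (@measurable_sqnorm R d) _.
  exact: measurable_cst.
by rewrite integral_cst //= probability_setT mule1 ltry.
Qed.

Variables (p : probability (Rd R d) R).
Hypothesis P2p : P2 p.

Lemma P2_integrable_sqnormD (c : R) :
  p.-integrable setT (EFin \o (fun z => sqnorm z + c)).
Proof.
have isq : p.-integrable setT (EFin \o @sqnorm R d).
  apply/integrableP; split.
    by apply/measurable_EFinP; exact: measurable_sqnorm.
  by under eq_integral do rewrite /= ger0_norm ?sqnorm_ge0 //.
rewrite (_ : _ \o _ = (EFin \o @sqnorm R d) \+ (EFin \o cst c)).
  by apply: integrableD => //; exact: finite_measure_integrable_cst.
by apply/funext => z /=; rewrite EFinD.
Qed.

Lemma P2_integrable_affine (v : Rd R d) (c : R) :
  p.-integrable setT (EFin \o (fun z => dotp z v - c)).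
Proof.
apply: integrable_normr_le (P2_integrable_sqnormD (sqnorm v + `|c|)) _.
  by apply: measurable_funB => //; exact: measurable_dotp.
move=> z; rewrite addrA; apply: le_trans (ler_normB _ _) _.
by rewrite lerD2r normr_dotp_le.
Qed.

Lemma P2_integrable_dotp_bounded (T : Rd R d -> Rd R d) (B : R) :
  measurable_fun setT T -> (forall z, sqnorm (T z) <= B) ->
  p.-integrable setT (EFin \o (fun z => dotp (T z) z)).
Proof.
move=> mT TB; apply: integrable_normr_le (P2_integrable_sqnormD B) _.
  exact: measurable_dotp.
by move=> z; apply: le_trans (normr_dotp_le _ _) _; rewrite addrC lerD2l.
Qed.

End SecondMoment.

Section ArgmaxSelection.
Variables (R : realType) (d : nat) (y : nat -> Rd R d) (a : nat -> R).

Definition affine_piece n (z : Rd R d) : R := dotp z (y n) - a n.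

Fixpoint argmax_piece N z : nat :=
  if N is N'.+1 then
    let n := argmax_piece N' z in
    if affine_piece n z < affine_piece N z then N else n
  else 0.

Definition max_piece N z : R := affine_piece (argmax_piece N z) z.

Lemma argmax_piece_le N z : (argmax_piece N z <= N)%N.
Proof. by elim: N => //= N IH; case: ifP => // _; exact: leqW. Qed.

Lemma normr_argmax_piece_le (h : nat -> R) N z :
  `|h (argmax_piece N z)| <= \sum_(n < N.+1) `|h n|.
Proof.
have nN : (argmax_piece N z < N.+1)%N by exact: argmax_piece_le.
by rewrite (bigD1 (Ordinal nN)) //= lerDl sumr_ge0.
Qed.

Lemma max_pieceS N z :
  max_piece N.+1 z = Num.max (max_piece N z) (affine_piece N.+1 z).
Proof.
rewrite /max_piece /=; case: ifPn => [/ltW/max_idPr ->//|].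
by rewrite -leNgt => /max_idPl ->.
Qed.

Lemma le_max_piece N n z : (n <= N)%N -> affine_piece n z <= max_piece N z.
Proof.
elim: N => [|N IH]; first by rewrite leqn0 => /eqP ->.
rewrite max_pieceS le_max leq_eqVlt => /orP[/eqP ->|/IH ->//].
by rewrite lexx orbT.
Qed.

Lemma max_piece_nondecreasing z : nondecreasing_seq (max_piece ^~ z).
Proof. by apply/nondecreasing_seqP => N; rewrite max_pieceS le_max lexx. Qed.

Lemma measurable_affine_piece n : measurable_fun setT (affine_piece n).
Proof. by apply: measurable_funB => //; exact: measurable_dotp. Qed.

Let measurable_max_piece_of N :
  measurable_fun setT (y \o argmax_piece N) ->
  measurable_fun setT (a \o argmax_piece N) ->
  measurable_fun setT (max_piece N).
Proof.
move=> my ma; rewrite -[max_piece N]/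
  ((fun z => dotp z (y (argmax_piece N z))) \- (a \o argmax_piece N)).
exact: measurable_funB (measurable_dotp (@measurable_id _ _ setT) my) ma.
Qed.

Lemma measurable_argmax_piece_comp N dT (T : measurableType dT) (h : nat -> T) :
  measurable_fun setT (h \o argmax_piece N).
Proof.
elim: N dT T h => [|N IH] dT T h; first exact: (measurable_cst (h 0%N)).
have mmax := measurable_max_piece_of (IH _ _ y) (IH _ _ a).
rewrite (_ : _ \o _ = fun z => if max_piece N z < affine_piece N.+1 z
                               then h N.+1 else h (argmax_piece N z)).
  apply: measurable_fun_ifT; last exact: IH.
    exact: measurable_fun_ltr mmax (measurable_affine_piece _).
  exact: measurable_cst.
by apply/funext => z /=; case: ifP.
Qed.

Lemma measurable_max_piece N : measurable_fun setT (max_piece N).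
Proof.
exact: measurable_max_piece_of (measurable_argmax_piece_comp _ y)
  (measurable_argmax_piece_comp _ a).
Qed.

End ArgmaxSelection.

Lemma fenchel_young (R : realType) (d : nat) (psi : Rd R d -> \bar R) z w :
  ((dotp z w)%:E - psi w <= conjugate psi z)%E.
Proof. by apply: ereal_sup_ubound; exists w. Qed.

Lemma floor_div_approx (R : realType) (t M : R) : 0 < M ->
  `|t - (Num.floor (t * M))%:~R / M| <= M^-1.
Proof.
move=> M0; have := floor_itv (t * M); set f := (Num.floor (t * M))%:~R.
rewrite intrD -/f => /andP[h1 h2].
have -> : t - f / M = (t * M - f) * M^-1 by field; rewrite gt_eqF.
rewrite normrM (@ger0_norm _ (t * M - f)); last by lra.
rewrite ger0_norm; last by rewrite invr_ge0 ltW.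
by rewrite -[leRHS]mul1r ler_wpM2r ?invr_ge0 ?ltW //; lra.
Qed.

Section ConjugateGrid.
Variables (R : realType) (d : nat) (psi : Rd R d -> \bar R) (x0 : Rd R d).
Hypothesis psix0 : psi x0 \is a fin_num.

(* [grid_cell (k, l, m)] is the set of points [y] at which [(y, psi y)] lies
   within [1/(m+1)] of the grid point [(k, l)/(m+1)] of [(Z^d x Z)/(m+1)];
   choosing one point per cell yields a sequence along which the affine
   functions [<z, y> - psi y] have the same supremum [conjugate psi z]. *)
Definition grid_cell (i : 'rV[int]_d * int * nat) : set (Rd R d) :=
  [set y | psi y \is a fin_num /\
    (forall c, `|y ord0 c - (i.1.1 ord0 c)%:~R / i.2.+1%:R| <= i.2.+1%:R^-1) /\
    `|fine (psi y) - i.1.2%:~R / i.2.+1%:R| <= i.2.+1%:R^-1].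

Definition grid_index (y : Rd R d) (m : nat) : 'rV[int]_d * int * nat :=
  (\row_c Num.floor (y ord0 c * m.+1%:R),
   Num.floor (fine (psi y) * m.+1%:R), m).

Lemma grid_cell_index y m : psi y \is a fin_num -> grid_cell (grid_index y m) y.
Proof.
move=> fy; split => //.
by split => [c|]; rewrite /= ?mxE; exact: floor_div_approx.
Qed.

Lemma grid_cell_close i y y' : grid_cell i y -> grid_cell i y' ->
  (forall c, `|y ord0 c - y' ord0 c| <= 2 * i.2.+1%:R^-1) /\
  fine (psi y') - fine (psi y) <= 2 * i.2.+1%:R^-1.
Proof.
move=> [_ [hy ay]] [_ [hy' ay']]; split => [c|].
  move: (hy c) (hy' c); set t := _^-1; set g := (_%:~R * t).
  by rewrite !ler_norml => /andP[? ?] /andP[? ?]; apply/andP; split; lra.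
move: ay ay'; set t := _^-1; set g := (_%:~R * t).
by rewrite !ler_norml => /andP[? ?] /andP[? ?]; lra.
Qed.

Definition grid_seq n : Rd R d :=
  if unpickle n is Some i then xget x0 (grid_cell i) else x0.

Definition grid_val n : R := fine (psi (grid_seq n)).

Lemma psi_grid_seq n : psi (grid_seq n) = (grid_val n)%:E.
Proof.
rewrite /grid_val fineK // /grid_seq; case: (unpickle n) => [i|//].
by case: xgetP => // y _ [].
Qed.

Lemma grid_seq_approx y z e : psi y \is a fin_num -> 0 < e ->
  exists n, dotp z y - fine (psi y) - e <= affine_piece grid_seq grid_val n z.
Proof.
move=> fy e0; set K := \sum_c `|z ord0 c|.
have K0 : 0 <= K by exact: sumr_ge0.
set B := (2 * K + 2) / e; set m := Num.trunc B.
have B0 : 0 <= B by rewrite divr_ge0 ?ltW //; lra.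
have BM : B < m.+1%:R by rewrite -truncn_lt_nat.
have M0 : 0 < m.+1%:R :> R by rewrite ltr0Sn.
pose i := grid_index y m; exists (pickle i).
have Cy' : grid_cell i (grid_seq (pickle i)).
  by rewrite /grid_seq pickleK; exact: xgetI (grid_cell_index m fy).
have [hc ha] := grid_cell_close (grid_cell_index m fy) Cy'.
have hD := dotp_sub_le z hc.
have hK : K * (2 * m.+1%:R^-1) + 2 * m.+1%:R^-1 <= e.
  rewrite (_ : _ + _ = (2 * K + 2) / m.+1%:R); last by ring.
  by rewrite ler_pdivrMr //; move: BM; rewrite ltr_pdivrMr // => ?; nra.
rewrite /affine_piece /grid_val; move: hD ha hK; rewrite /i /=.
set t := _^-1; set u := K * _ => *; lra.
Qed.

Lemma affine_piece_grid_le_conjugate z n :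
  ((affine_piece grid_seq grid_val n z)%:E <= conjugate psi z)%E.
Proof. by rewrite EFinB -psi_grid_seq; exact: fenchel_young. Qed.

Lemma conjugate_le_sup_grid z : (forall y, psi y != -oo%E) ->
  (conjugate psi z <=
     ereal_sup (range (fun n => (affine_piece grid_seq grid_val n z)%:E)))%E.
Proof.
move=> psiNy; apply: ge_ereal_sup => _ [y _ <-].
move: (psiNy y); case E: (psi y) => [r| |] //= _; last by rewrite leNye.
apply/lee_addgt0Pr => e e0.
have fy : psi y \is a fin_num by rewrite E.
have [n hn] := grid_seq_approx z fy e0.
apply: le_trans (leeD2r _ (ereal_sup_ubound (ex_intro2 _ _ n I erefl))).
by rewrite -!EFinD lee_fin; move: hn; rewrite E /=; lra.
Qed.

End ConjugateGrid.

Definition MCov_dual (R : realType) (d : nat) (q : probability (Rd R d) R)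
    (psi : Rd R d -> \bar R) : \bar R :=
  ereal_sup [set (MCov p q - \int[p]_x psi x)%E
            | p in [set p : probability (Rd R d) R | P2 p]].

Section Competitor.
Variables (R : realType) (d : nat) (q : probability (Rd R d) R).
Variable psi : Rd R d -> \bar R.
Hypotheses (P2q : P2 q) (mpsi : measurable_fun setT psi).

(* The competitor is [p = T # q], coupled to [q] through [(T, id) # q]. *)
Lemma le_MCov_dual_pushforward (T : Rd R d -> Rd R d) (A : Rd R d -> R)
    (B C : R) :
  measurable_fun setT T -> measurable_fun setT A ->
  (forall z, sqnorm (T z) <= B) -> (forall z, `|A z| <= C) ->
  (forall z, psi (T z) = (A z)%:E) ->
  (\int[q]_z (dotp (T z) z - A z)%:E <= MCov_dual q psi)%E.
Proof.
move=> mT mA TB AC psiT.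
have mTid : measurable_fun setT (fun z => (T z, z)).
  exact: measurable_fun_pair mT (@measurable_id _ _ setT).
pose Tm : {mfun Rd R d >-> Rd R d} :=
  HB.pack T (isMeasurableFun.Build _ _ _ _ _ mT).
pose Tid : {mfun Rd R d >-> (Rd R d * Rd R d)%type} :=
  HB.pack (fun z => (T z, z)) (isMeasurableFun.Build _ _ _ _ _ mTid).
have iA : q.-integrable setT (EFin \o A).
  apply: (integrable_normr_le (b := cst C)) => //.
  exact: finite_measure_integrable_cst.
have iTz := P2_integrable_dotp_bounded P2q mT TB.
have psi_p : (\int[distribution q Tm]_x psi x = \int[q]_z (A z)%:E)%E.
  rewrite (integral_image_measure (mu := q) mT) //.
  by apply: eq_integral => z _; rewrite psiT.
have dotp_pi : (\int[distribution q Tid]_w (dotp w.1 w.2)%:E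
               = \int[q]_z (dotp (T z) z)%:E)%E.
  rewrite (integral_image_measure (mu := q) mTid) //.
  apply/measurable_EFinP.
  by apply: measurable_dotp; [exact: measurable_fst|exact: measurable_snd].
apply: le_trans (ereal_sup_ubound _); last first.
  exists (distribution q Tm) => //.
  exact: (@P2_distribution_bounded _ _ q Tm B TB).
rewrite integralB_EFin // psi_p -dotp_pi leeB //.
by apply: ereal_sup_ubound; exists (distribution q Tid).
Qed.

End Competitor.

Section Duality.
Variables (R : realType) (d : nat) (q : probability (Rd R d) R).
Variable psi : Rd R d -> \bar R.
Hypotheses (P2q : P2 q) (mpsi : measurable_fun setT psi).
Variable x0 : Rd R d.
Hypotheses (psix0 : psi x0 \is a fin_num) (psiNy : forall x, psi x != -oo%E).

Local Notation y := (grid_seq psi x0).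
Local Notation a := (grid_val psi x0).

Lemma max_piece_cvg_conjugate z :
  ((max_piece y a N z)%:E @[N --> \oo] --> conjugate psi z)%E.
Proof.
have nd : nondecreasing_seq (fun N => (max_piece y a N z)%:E).
  by move=> m n mn; rewrite lee_fin; exact: max_piece_nondecreasing.
suff <- : ereal_sup (range (fun N => (max_piece y a N z)%:E)) = conjugate psi z.
  exact: ereal_nondecreasing_cvgn.
apply/eqP; rewrite eq_le; apply/andP; split.
  by apply: ge_ereal_sup => _ [N _ <-]; exact: affine_piece_grid_le_conjugate.
apply: le_trans (conjugate_le_sup_grid x0 z psiNy) _.
apply: ge_ereal_sup => _ [n _ <-].
apply: le_trans (ereal_sup_ubound (ex_intro2 _ _ n I erefl)).
by rewrite lee_fin le_max_piece.
Qed.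

Lemma measurable_conjugate : measurable_fun setT (conjugate psi).
Proof.
apply: (emeasurable_fun_cvg (fun N z => (max_piece y a N z)%:E)).
  by move=> N; apply/measurable_EFinP; exact: measurable_max_piece.
by move=> z _; exact: max_piece_cvg_conjugate.
Qed.

(* Monotone convergence, applied after subtracting the integrable minorant
   [affine_piece y a 0] of all the [max_piece y a N]. *)
Lemma integral_max_piece_cvg : (\int[q]_z (max_piece y a N z)%:E
  @[N --> \oo] --> \int[q]_z conjugate psi z)%E.
Proof.
set f0 := affine_piece y a 0.
have if0 : q.-integrable setT (EFin \o f0) := P2_integrable_affine P2q _ _.
have f0fin := integrable_fin_num measurableT if0.
have f0_le N z : ((f0 z)%:E <= (max_piece y a N z)%:E)%E.
  by rewrite lee_fin le_max_piece.
have mmax N : measurable_fun setT (fun z => (max_piece y a N z)%:E).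
  by apply/measurable_EFinP; exact: measurable_max_piece.
rewrite (integral_lbounded_split measurable_conjugate
  (fun z => affine_piece_grid_le_conjugate psix0 z 0) if0).
under eq_fun do rewrite (integral_lbounded_split (mmax _) (f0_le _) if0).
apply: cvgeD (cvg_cst _); first exact: fin_num_adde_defl.
have lim z : limn (fun N => (max_piece y a N z)%:E - (f0 z)%:E)%E =
    (conjugate psi z - (f0 z)%:E)%E.
  apply/cvg_lim => //; apply: cvgeB; last exact: cvg_cst.
  - exact: fin_num_adde_defl.
  - exact: max_piece_cvg_conjugate.
have := @cvg_monotone_convergence _ _ _ q _ measurableT
  (fun N z => (max_piece y a N z)%:E - (f0 z)%:E)%E.
rewrite (_ : (\int[q]_z (conjugate psi z - (f0 z)%:E) = \int[q]_z limn
   ((fun N z => (max_piece y a N z)%:E - (f0 z)%:E) ^~ z))%E); last first.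
  by apply: eq_integral => z _; rewrite -lim.
apply.
- by move=> N; apply: emeasurable_funB (mmax N) (measurable_int _ if0).
- by move=> N z _; rewrite sube_ge0.
- by move=> z _ m n mn; rewrite leeB // lee_fin max_piece_nondecreasing.
Qed.

Lemma le_integral_conjugate_MCov_dual :
  (\int[q]_z conjugate psi z <= MCov_dual q psi)%E.
Proof.
rewrite -(cvg_lim (@ereal_hausdorff R) integral_max_piece_cvg).
apply: lime_le; first exact: cvgP integral_max_piece_cvg.
apply: nearW => N.
rewrite (eq_integral (fun z => (dotp (y (argmax_piece y a N z)) z
                                - a (argmax_piece y a N z))%:E)); last first.
  by move=> z _; rewrite /max_piece /affine_piece dotpC.
apply: (le_MCov_dual_pushforward P2q mpsi (B := \sum_(n < N.+1) `|sqnorm (y n)|)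
  (C := \sum_(n < N.+1) `|a n|)).
- exact: measurable_argmax_piece_comp.
- exact: measurable_argmax_piece_comp.
- move=> z; apply: le_trans (ler_norm _) _.
  exact: (@normr_argmax_piece_le _ _ y a (fun n => sqnorm (y n))).
- by move=> z; exact: (@normr_argmax_piece_le _ _ y a a).
- by move=> z; exact: psi_grid_seq.
Qed.


Lemma conjugate_affine_minorant v c :
  conjugate psi v = c%:E -> forall w, ((dotp w v - c)%:E <= psi w)%E.
Proof.
move=> hc w; have := fenchel_young psi v w; rewrite hc dotpC.
move: (psiNy w); case: (psi w) => [r| |] //= _; last by rewrite leey.
by rewrite -EFinB !lee_fin => ?; lra.
Qed.

Lemma dotp_le_conjugateD w z : ((dotp w z)%:E <= conjugate psi z + psi w)%E.
Proof.
have conjNy : conjugate psi z != -oo%E.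
  rewrite -ltNye; apply: lt_le_trans (affine_piece_grid_le_conjugate psix0 z 0).
  exact: ltNyr.
move: (psiNy w) (fenchel_young psi z w); case: (psi w) => [r| |] //= _ h.
  by rewrite -leeBlDr // dotpC.
by rewrite addey ?leey.
Qed.

Lemma integral_dotp_coupling_le (p : probability (Rd R d) R) pi v c :
  P2 p -> Cpl p q pi -> (forall w, ((dotp w v - c)%:E <= psi w)%E) ->
  (\int[pi]_w (dotp w.1 w.2)%:E
     <= \int[q]_z conjugate psi z + \int[p]_x psi x)%E.
Proof.
move=> P2p [pi_p pi_q] psi_ge.
have fst_image A : measurable A -> p A = pi (fst @^-1` A).
  by move=> mA; rewrite pi_p.
have snd_image A : measurable A -> q A = pi (snd @^-1` A).
  by move=> mA; rewrite pi_q.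
have mconj2 :
    measurable_fun setT (fun w : Rd R d * Rd R d => conjugate psi w.2).
  exact: measurableT_comp measurable_conjugate measurable_snd.
have mpsi1 : measurable_fun setT (fun w : Rd R d * Rd R d => psi w.1).
  exact: measurableT_comp mpsi measurable_fst.
apply: (@le_trans _ _ (\int[pi]_w (conjugate psi w.2 + psi w.1))%E).
  apply: le_integral_measurable; last by move=> w; exact: dotp_le_conjugateD.
    apply/measurable_EFinP.
    by apply: measurable_dotp; [exact: measurable_fst|exact: measurable_snd].
  exact: emeasurable_funD.
have iaff0 : q.-integrable setT (EFin \o affine_piece y a 0).
  exact: P2_integrable_affine.
have iaff := P2_integrable_affine P2p v c.
rewrite (integralD_lbounded
  (g1 := fun w : Rd R d * Rd R d => affine_piece y a 0 w.2)
  (g2 := fun w : Rd R d * Rd R d => dotp w.1 v - c)) //.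
- rewrite (integral_image_measure measurable_fst fst_image mpsi).
  by rewrite (integral_image_measure measurable_snd snd_image
                                     measurable_conjugate).
- by move=> w; exact: affine_piece_grid_le_conjugate.
- exact: (integrable_image_measure (mu := pi) measurable_snd snd_image iaff0).
- exact: (integrable_image_measure (mu := pi) measurable_fst fst_image iaff).
Qed.

Lemma MCov_sub_integral_le (p : probability (Rd R d) R) : P2 p ->
  (MCov p q - \int[p]_x psi x <= \int[q]_z conjugate psi z)%E.
Proof.
move=> P2p.
have [[v conj_v]|conj_oo] := pselect (exists v, conjugate psi v < +oo)%E;
  last first.
  rewrite [leRHS](eq_integral (cst +oo%E)) ?integral_cst //.
    by rewrite gt0_mulye ?leey //; have := probability_setT q; move=> /= ->.
  move=> z _; apply/eqP; rewrite eq_le leey leNgt /=.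
  by apply/negP => ?; apply: conj_oo; exists z.
set c := fine (conjugate psi v).
have hv : conjugate psi v = c%:E.
  rewrite fineK // fin_numElt conj_v andbT.
  exact: lt_le_trans (ltNyr _) (affine_piece_grid_le_conjugate psix0 v 0).
have psi_ge := conjugate_affine_minorant hv.
have iaff := P2_integrable_affine P2p v c.
have [->|psi_fin] := eqVneq (\int[p]_x psi x)%E +oo%E.
  by rewrite addeNy leNye.
have : (\int[p]_x psi x)%E \is a fin_num.
  by rewrite fin_numElt (integral_lbounded_gtNy mpsi psi_ge iaff) ltey psi_fin.
move=> /leeBlDr ->; apply: ge_ereal_sup => _ [pi cpl <-].
exact: integral_dotp_coupling_le P2p cpl psi_ge.
Qed.

Theorem MCov_dual_eq : MCov_dual q psi = (\int[q]_z conjugate psi z)%E.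
Proof.
apply/eqP; rewrite eq_le le_integral_conjugate_MCov_dual andbT.
by apply: ge_ereal_sup => _ [p P2p <-]; exact: MCov_sub_integral_le.
Qed.

End Duality.

Unset Implicit Arguments.

Theorem lemma2p6 (R : realType) (d : nat) (q : probability (Rd R d) R)
    (psi : Rd R d -> \bar R) :
  P2 q -> no_small_mass q -> proper_convex psi -> measurable_fun setT psi ->
  ereal_sup [set (MCov p q - \int[p]_x psi x)%E
            | p in [set p : probability (Rd R d) R | P2 p]]
  = (\int[q]_z conjugate psi z)%E.
Proof.
move=> P2q _ [psiNy [[x0 psix0] _]] mpsi.
have fx0 : psi x0 \is a fin_num by rewrite fin_numElt ltNye psiNy psix0.
exact (MCov_dual_eq P2q mpsi fx0 psiNy).
Qed.
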